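(* Let $\mathbf{A}\in\mathbb{R}^{n\times n}$ be symmetric positive semidefinite with $\mathbf{1}^{\intercal}\mathbf{A}=\mathbf{0}^{\intercal}$, and let $\mathbf{x}\in\{-1,1\}^n$. Set $M=\frac14\mathbf{x}^{\intercal}\mathbf{A}\mathbf{x}$ and $S=\{i\in\{1,\dots,n\}:\mathbf{x}_i=1\}$, and assume $S\neq\emptyset$. Then there exists $i\in S$ such that, letting $\mathbf{x}'$ be $\mathbf{x}$ with its $i$-th entry changed to $-1$, we have $M-\frac14\mathbf{x}'^{\intercal}\mathbf{A}\mathbf{x}'\le\frac{2M}{|S|}$.
   Context: $\mathbf{1}$ is the all-ones vector and $\mathbf{0}$ the all-zeros vector. *)

From mathcomp Require Import all_boot all_order all_algebra.
Set Implicit Arguments. Unset Strict Implicit. Unset Printing Implicit Defensive.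
Import Order.TTheory GRing.Theory Num.Theory.
Local Open Scope ring_scope.

Definition qform (R : ringType) (n : nat) (A : 'M[R]_n) (v : 'cV[R]_n) : R :=
  ((v^T *m A *m v) 0 0).

Definition psd (R : numDomainType) (n : nat) (A : 'M[R]_n) : Prop :=
  forall v : 'cV[R]_n, 0 <= qform A v.

Definition flip_to_neg (R : ringType) (n : nat) (x : 'cV[R]_n) (i : 'I_n) : 'cV[R]_n :=
  \col_j (if j == i then -1 else x j 0).

From mathcomp Require Import all_boot all_order all_algebra.
From mathcomp Require Import ring lra.
Set Implicit Arguments. Unset Strict Implicit. Unset Printing Implicit Defensive.
Import Order.TTheory GRing.Theory Num.Theory.
Local Open Scope ring_scope.

(* Flipping an entry x_i = 1 to -1 subtracts 2 e_i from x, which changes x^T A x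
   by -4 (A x)_i + 4 A_ii; so the loss M - M' equals (A x)_i - A_ii <= (A x)_i,
   the diagonal being nonnegative for a semidefinite A.  Since 1^T A = 0, the
   entries (A x)_i with i in S sum to (1^T A x + x^T A x) / 2 = 2M, so the
   smallest of them is at most 2M / |S|. *)

Section QuadraticForm.
Variables (R : comNzRingType) (n : nat) (A : 'M[R]_n).

Lemma qformD u v :
  qform A (u + v) =
  qform A u + qform A v + (u^T *m A *m v) 0 0 + (v^T *m A *m u) 0 0.
Proof. by rewrite /qform mulmxDr [(u + v)^T]raddfD !mulmxDl !mxE /=; ring. Qed.

Lemma qformZ a v : qform A (a *: v) = a ^+ 2 * qform A v.
Proof.
by rewrite /qform -scalemxAr [(_ *: _)^T]linearZ /= -!scalemxAl !mxE mulrA expr2.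
Qed.

Lemma qform_delta i : qform A (delta_mx i 0) = A i i.
Proof. by rewrite /qform trmx_delta -rowE -colE !mxE. Qed.

Lemma bilin_deltal i (v : 'cV[R]_n) :
  ((delta_mx i 0 : 'cV[R]_n)^T *m A *m v) 0 0 = (A *m v) i 0.
Proof. by rewrite trmx_delta -mulmxA -rowE mxE. Qed.

Hypothesis Asym : A^T = A.

Lemma bilin_deltar i (v : 'cV[R]_n) :
  (v^T *m A *m (delta_mx i 0 : 'cV[R]_n)) 0 0 = (A *m v) i 0.
Proof.
rewrite -[LHS]trace_mx11 -mxtrace_tr !trmx_mul trmxK Asym mulmxA.
by rewrite trace_mx11 bilin_deltal.
Qed.

Lemma qformD_scale_delta (x : 'cV[R]_n) a i :
  qform A (x + a *: delta_mx i 0) = qform A x + 2 * a * (A *m x) i 0 + a ^+ 2 * A i i.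
Proof.
rewrite qformD qformZ qform_delta -scalemxAr [(_ *: _)^T]linearZ /= -!scalemxAl.
by rewrite ![(a *: _ : 'M_1) 0 0]mxE bilin_deltal bilin_deltar; ring.
Qed.

Lemma qform_flip_to_neg (x : 'cV[R]_n) i : x i 0 = 1 ->
  qform A (flip_to_neg x i) = qform A x - 4 * (A *m x) i 0 + 4 * A i i.
Proof.
move=> xi1; have -> : flip_to_neg x i = x + (-2) *: delta_mx i 0.
  apply/matrixP => j k; rewrite !mxE ord1 eqxx andbT.
  by case: eqP => [->|_] /=; rewrite ?xi1; ring.
by rewrite (qformD_scale_delta x (-2) i); ring.
Qed.

End QuadraticForm.

Lemma qform_sign_vectorE (R : comNzRingType) n (A : 'M[R]_n) (x : 'cV[R]_n) :
  (const_mx 1 : 'rV[R]_n) *m A = 0 ->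
  (forall j, x j 0 = 1 \/ x j 0 = -1) ->
  qform A x = 2 * \sum_(j | x j 0 == 1) (A *m x) j 0.
Proof.
move=> A1 xpm; have indicator j : 2 * (x j 0 == 1)%:R = 1 + x j 0.
  by case: eqP => [->|xj_neq1] /=; [ring | case: (xpm j) => // ->; ring].
transitivity (((const_mx 1 + x^T) *m (A *m x)) 0 0).
  by rewrite mulmxDl mulmxA A1 mul0mx add0r mulmxA.
rewrite big_mkcond mulr_sumr mxE; apply: eq_bigr => j _.
by rewrite !mxE -indicator; case: (x j 0 == 1) => /=; ring.
Qed.

Lemma exists_le_mean (R : realFieldType) (I : finType) (S : {set I}) (F : I -> R) :
  S != set0 -> exists2 i, i \in S & F i <= (\sum_(j in S) F j) / #|S|%:R.
Proof.
case/set0Pn => i0 Si0; have [i Si minF] := arg_minP F Si0.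
exists i => //; rewrite ler_pdivlMr ?ltr0n ?card_gt0; last by apply/set0Pn; exists i0.
have : \sum_(j in S) F i <= \sum_(j in S) F j by apply: ler_sum.
by rewrite sumr_const mulr_natr.
Qed.

Lemma psd_diag_ge0 (R : numDomainType) n (A : 'M[R]_n) i : psd A -> 0 <= A i i.
Proof. by move=> Apsd; rewrite -qform_delta; apply: Apsd. Qed.

Theorem lemma3p6 (R : realFieldType) (n : nat) (A : 'M[R]_n) (x : 'cV[R]_n) :
  A^T = A ->
  psd A ->
  (const_mx 1 : 'rV[R]_n) *m A = 0 ->
  (forall j : 'I_n, x j 0 = 1 \/ x j 0 = -1) ->
  let M := qform A x / 4 in
  let S := [set j : 'I_n | x j 0 == 1] in
  S != set0 ->
  exists2 i : 'I_n, i \in S &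
    M - qform A (flip_to_neg x i) / 4 <= 2 * M / #|S|%:R.
Proof.
move=> Asym Apsd A1 xpm M S SN0.
have [i Si le_mean] := exists_le_mean (fun j => (A *m x) j 0) SN0.
exists i => //.
have xi1 : x i 0 = 1 by move: Si; rewrite inE => /eqP.
have sumS : \sum_(j in S) (A *m x) j 0 = 2 * M.
  rewrite /M (qform_sign_vectorE A1 xpm).
  by under eq_bigl => j do rewrite inE; field.
rewrite qform_flip_to_neg // -sumS.
have := psd_diag_ge0 i Apsd; rewrite /M; lra.
Qed.
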